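(* Let $\mathcal{A}:\mathbb{C}^{m\times n}\to\mathbb{C}^p$ be linear with rank-restricted isometry constant $\delta_r(\mathcal{A})$. Let $\Psi,\Upsilon\subset\mathbb{O}$ be sets of atoms and $X\in\mathbb{C}^{m\times n}$ such that $\mathcal{P}_\Upsilon^\perp\mathcal{P}_\Psi=\mathcal{P}_\Psi\mathcal{P}_\Upsilon^\perp$, $\mathcal{P}_\Upsilon^\perp X=0$, and $|\Psi|\le r$. Then $\|\mathcal{P}_\Upsilon^\perp\mathcal{P}_\Psi\mathcal{A}^*\mathcal{A}\mathcal{P}_\Psi X\|_F\le\sqrt2\,\delta_r(\mathcal{A})\|\mathcal{P}_\Psi X\|_F$.
   Context: $\mathbb{C}^p$ has inner product $\langle x,y\rangle=y^Hx$ and norm $\|\cdot\|_2$; $\mathbb{C}^{m\times n}$ has inner product $\langle X,Y\rangle=\mathrm{tr}(Y^HX)$ and Frobenius norm $\|\cdot\|_F$; $\mathcal{A}^*$ is the adjoint of $\mathcal{A}$. $\delta_r(\mathcal{A})$ is the smallest $\delta\ge0$ such that $(1-\delta)\|X\|_F^2\le\|\mathcal{A}X\|_2^2\le(1+\delta)\|X\|_F^2$ for all $X$ with $\mathrm{rank}(X)\le r$. The set of atoms $\mathbb{O}$ is a set of unit-Frobenius-norm rank-one matrices in $\mathbb{C}^{m\times n}$ such that every nonzero rank-one matrix is a scalar multiple of exactly one element of $\mathbb{O}$. For $\Psi\subset\mathbb{O}$, $\mathcal{P}_\Psi$ is the orthogonal projection onto $\mathrm{span}(\Psi)$ and $\mathcal{P}_\Psi^\perp=I-\mathcal{P}_\Psi$.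 *)

(* matrices over C := R[i] for an arbitrary real closed field R
   (R = the reals gives C = the complex numbers). *)
From HB Require Import structures.
From mathcomp Require Import all_boot all_order all_algebra.
From mathcomp Require Import complex.
Set Implicit Arguments. Unset Strict Implicit. Unset Printing Implicit Defensive.
Import Order.TTheory GRing.Theory Num.Theory.
Local Open Scope ring_scope.

Section Defs.
Variable R : rcfType.
Local Notation C := R[i].

Definition ctr (m n : nat) (X : 'M[C]_(m, n)) : 'M[C]_(n, m) :=
  (map_mx (@conjc R) X)^T.

Definition minner (m n : nat) (X Y : 'M[C]_(m, n)) : C := \tr (ctr Y *m X).
Definition vinner (p : nat) (x y : 'cV[C]_p) : C := (ctr y *m x) 0 0.

Definition frob (m n : nat) (X : 'M[C]_(m, n)) : R := Num.sqrt (@complex.Re R (minner X X)).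
Definition norm2 (p : nat) (x : 'cV[C]_p) : R := Num.sqrt (@complex.Re R (vinner x x)).

Definition is_adjoint (m n p : nat) (A : 'M[C]_(m, n) -> 'cV[C]_p)
  (Astar : 'cV[C]_p -> 'M[C]_(m, n)) : Prop :=
  forall X y, vinner (A X) y = minner X (Astar y).

Definition rip_bound (m n p r : nat) (A : 'M[C]_(m, n) -> 'cV[C]_p) (d : R) : Prop :=
  0 <= d /\ forall X : 'M[C]_(m, n), (\rank X <= r)%N ->
    (1 - d) * frob X ^+ 2 <= norm2 (A X) ^+ 2 <= (1 + d) * frob X ^+ 2.

Definition is_rip_const (m n p r : nat) (A : 'M[C]_(m, n) -> 'cV[C]_p) (d : R) : Prop :=
  rip_bound r A d /\ forall d', rip_bound r A d' -> d <= d'.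

Definition atom_set (m n : nat) (O : 'M[C]_(m, n) -> Prop) : Prop :=
  (forall a, O a -> \rank a = 1%N /\ frob a = 1) /\
  (forall Y : 'M[C]_(m, n), \rank Y = 1%N ->
     exists a, (O a /\ exists c : C, Y = c *: a) /\
       forall b, (O b /\ exists c : C, Y = c *: b) -> b = a).

Definition in_span (m n : nat) (S : 'M[C]_(m, n) -> Prop) (Y : 'M[C]_(m, n)) : Prop :=
  exists (k : nat) (v : 'I_k -> 'M[C]_(m, n)) (c : 'I_k -> C),
    (forall i, S (v i)) /\ Y = \sum_(i < k) c i *: v i.

Definition is_orth_proj (m n : nat) (S : 'M[C]_(m, n) -> Prop)
  (P : 'M[C]_(m, n) -> 'M[C]_(m, n)) : Prop :=
  forall X, in_span S (P X) /\ forall Z, in_span S Z -> minner (X - P X) Z = 0.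

Definition card_le (m n : nat) (S : 'M[C]_(m, n) -> Prop) (r : nat) : Prop :=
  exists s : seq 'M[C]_(m, n), (size s <= r)%N /\ forall x, S x <-> x \in s.

End Defs.

(* Write Y := P_Psi X and V := P_Ups^perp P_Psi A^* A Y.  Since P_Ups^perp X = 0 and the
   projections commute, Y lies in span(Ups) while V lies in span(Psi) and in span(Ups)^perp,
   so V is orthogonal to Y and ||V||^2 = Re <A V, A Y>.  Every V + t Y (t real) lies in the
   span of at most r atoms, hence has rank at most r, and subtracting the RIP bounds for
   V - t Y from those for V + t Y gives 2 t ||V||^2 <= delta (||V||^2 + t^2 ||Y||^2).  Choosing
   t = ||V|| / ||Y|| yields ||V|| <= delta ||Y||, which is even stronger than the claim. *)
From HB Require Import structures.
From mathcomp Require Import all_boot all_order all_algebra.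
From mathcomp Require Import complex.
From mathcomp Require Import ring lra.
Import Order.TTheory GRing.Theory Num.Theory.
Set Implicit Arguments. Unset Strict Implicit.
Local Open Scope ring_scope.

Local Notation Re := (@complex.Re _).
Local Notation Im := (@complex.Im _).

Section RealInnerProduct.
Variable R : rcfType.
Local Notation C := R[i].
Implicit Types (t : R) (x y : C).

Lemma Re_conjcM x y : Re (y^* * x)%C = Re x * Re y + Im x * Im y.
Proof. by case: x => a b; case: y => c d /=; ring. Qed.

Lemma Re_realM t x : Re ((t%:C)%C * x) = t * Re x.
Proof. by case: x => a b /=; ring. Qed.

Lemma Im_realM t x : Im ((t%:C)%C * x) = t * Im x.
Proof. by case: x => a b /=; ring. Qed.

Definition rdot m n (X Y : 'M[C]_(m, n)) : R := Re (minner X Y).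

Variables m n : nat.
Implicit Types X Y Z : 'M[C]_(m, n).

Lemma rdotE X Y : rdot X Y =
  \sum_(i < m) \sum_(j < n) (Re (X i j) * Re (Y i j) + Im (X i j) * Im (Y i j)).
Proof.
rewrite /rdot /minner /mxtrace raddf_sum exchange_big; apply: eq_bigr => j _.
rewrite mxE raddf_sum; apply: eq_bigr => i _; rewrite /ctr !mxE; exact: Re_conjcM.
Qed.

Lemma rdotC X Y : rdot X Y = rdot Y X.
Proof. by rewrite !rdotE; apply: eq_bigr => i _; apply: eq_bigr => j _; ring. Qed.

Lemma rdotDl X Y Z : rdot (X + Y) Z = rdot X Z + rdot Y Z.
Proof.
rewrite !rdotE -big_split; apply: eq_bigr => i _; rewrite -big_split.
by apply: eq_bigr => j _; rewrite !mxE !raddfD /=; ring.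
Qed.

Lemma rdotZl t X Z : rdot ((t%:C)%C *: X) Z = t * rdot X Z.
Proof.
rewrite !rdotE mulr_sumr; apply: eq_bigr => i _; rewrite mulr_sumr.
by apply: eq_bigr => j _; rewrite !mxE Re_realM Im_realM; ring.
Qed.

Lemma rdotNl X Z : rdot (- X) Z = - rdot X Z.
Proof.
have -> : - X = ((-1)%:C)%C *: X by rewrite raddfN /= scaleN1r.
by rewrite rdotZl mulN1r.
Qed.

Lemma rdotBl X Y Z : rdot (X - Y) Z = rdot X Z - rdot Y Z.
Proof. by rewrite rdotDl rdotNl. Qed.

Lemma rdotDr X Y Z : rdot Z (X + Y) = rdot Z X + rdot Z Y.
Proof. by rewrite rdotC rdotDl !(rdotC Z). Qed.

Lemma rdotBr X Y Z : rdot Z (X - Y) = rdot Z X - rdot Z Y.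
Proof. by rewrite rdotC rdotBl !(rdotC Z). Qed.

Lemma rdotZr t X Z : rdot Z ((t%:C)%C *: X) = t * rdot Z X.
Proof. by rewrite rdotC rdotZl rdotC. Qed.

Lemma rdotxx_ge0 X : 0 <= rdot X X.
Proof. by rewrite rdotE; apply: sumr_ge0 => i _; apply: sumr_ge0 => j _; nra. Qed.

Lemma rdotxx_eq0 X : rdot X X = 0 -> X = 0.
Proof.
have sq_ge0 i j : 0 <= Re (X i j) * Re (X i j) + Im (X i j) * Im (X i j) by nra.
rewrite rdotE => /eqP; rewrite psumr_eq0 => [/allP X0|i _]; last exact: sumr_ge0.
apply/matrixP => i j; rewrite mxE.
move: X0 => /(_ i (mem_index_enum _)); rewrite psumr_eq0 // => /allP.
move=> /(_ j (mem_index_enum _)) /eqP; case: (X i j) => a b /= ab0.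
by apply/eqP; rewrite eq_complex /=; apply/andP; split; apply/eqP; nra.
Qed.

Lemma rdot_add_realZ t X Y :
  rdot (X + (t%:C)%C *: Y) (X + (t%:C)%C *: Y) =
  rdot X X + 2 * t * rdot X Y + t ^+ 2 * rdot Y Y.
Proof. by rewrite !rdotDl !rdotDr !rdotZl !rdotZr (rdotC Y X); ring. Qed.

Lemma frob_ge0 X : 0 <= frob X.
Proof. exact: sqrtr_ge0. Qed.

Lemma frob_sqr X : frob X ^+ 2 = rdot X X.
Proof. by rewrite sqr_sqrtr // rdotxx_ge0. Qed.

End RealInnerProduct.

Lemma vinnerE (R : rcfType) p (x y : 'cV[R[i]]_p) : vinner x y = minner x y.
Proof. by rewrite /minner /mxtrace big_ord1. Qed.

Lemma norm2_sqr (R : rcfType) p (x : 'cV[R[i]]_p) : norm2 x ^+ 2 = rdot x x.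
Proof. by rewrite /norm2 vinnerE sqr_sqrtr // rdotxx_ge0. Qed.

Section OrthogonalProjection.
Variables (R : rcfType) (m n : nat).
Variables (S : 'M[R[i]]_(m, n) -> Prop) (P : 'M[R[i]]_(m, n) -> 'M[R[i]]_(m, n)).
Hypothesis projP : is_orth_proj S P.

Lemma orth_proj_span X : in_span S (P X).
Proof. exact: (projP X).1. Qed.

Lemma rdot_orth_proj_residual X Z : in_span S Z -> rdot (X - P X) Z = 0.
Proof. by move=> SZ; rewrite /rdot (projP X).2. Qed.

Lemma orth_proj0 : P 0 = 0.
Proof.
apply: rdotxx_eq0; have := rdot_orth_proj_residual 0 (orth_proj_span 0).
by rewrite sub0r rdotNl => /eqP; rewrite oppr_eq0 => /eqP.
Qed.

Lemma rdot_orth_projr X Z : in_span S Z -> rdot Z (P X) = rdot Z X.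
Proof.
move=> SZ; apply/eqP; rewrite eq_sym -subr_eq0 -rdotBr rdotC.
by rewrite rdot_orth_proj_residual.
Qed.

Lemma rdot_orth_proj_residualxx X : rdot (X - P X) (X - P X) = rdot (X - P X) X.
Proof. by rewrite rdotBr (rdot_orth_proj_residual _ (orth_proj_span X)) subr0. Qed.

End OrthogonalProjection.

Lemma mxrank_sumsmx_seq_le (F : fieldType) m n (s : seq 'M[F]_(m, n)) :
  (\rank (\sum_(x <- s) <<x>>)%MS <= \sum_(x <- s) \rank x)%N.
Proof.
elim: s => [|x s IH]; first by rewrite !big_nil mxrank0.
rewrite !big_cons; apply: leq_trans (mxrank_adds_leqif _ _).1 _.
by rewrite genmxE leq_add2l.
Qed.

Lemma span_rank1_sub (R : rcfType) m n (S : 'M[R[i]]_(m, n) -> Prop) r :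
  card_le S r -> (forall a, S a -> \rank a = 1%N) ->
  exists B : 'M_n, (\rank B <= r)%N /\ forall M, in_span S M -> (M <= B)%MS.
Proof.
move=> [s [size_s memS]] rank1; exists (\sum_(x <- s) <<x>>)%MS; split.
  apply: leq_trans (mxrank_sumsmx_seq_le s) _.
  rewrite (eq_big_seq (fun=> 1%N)) ?sum1_size // => x /memS; exact: rank1.
move=> _ [k [v [c [Sv ->]]]]; apply: summx_sub => i _; apply: scalemx_sub.
have /memS vi_s := Sv i.
by rewrite (big_rem _ vi_s) /=; apply: submx_trans (addsmxSl _ _); rewrite genmxE.
Qed.

Lemma rip_polarization (R : rcfType) m n p r
    (A : {linear 'M[R[i]]_(m, n) -> 'cV[R[i]]_p}) (d : R) (V Y : 'M[R[i]]_(m, n)) :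
  rip_bound r A d -> (forall t : R, \rank (V + (t%:C)%C *: Y)%R <= r)%N ->
  rdot V Y = 0 ->
  forall t, 2 * t * rdot (A V) (A Y) <= d * (rdot V V + t ^+ 2 * rdot Y Y).
Proof.
move=> [_ ripA] rankVY VY0 t.
have rip s : (1 - d) * rdot (V + (s%:C)%C *: Y) (V + (s%:C)%C *: Y)
    <= rdot (A (V + (s%:C)%C *: Y)) (A (V + (s%:C)%C *: Y))
    <= (1 + d) * rdot (V + (s%:C)%C *: Y) (V + (s%:C)%C *: Y).
  by rewrite -norm2_sqr -frob_sqr; exact: ripA (rankVY s).
have /andP[_ upper] := rip t; have /andP[lower _] := rip (- t).
move: upper lower; rewrite !linearD !linearZ !rdot_add_realZ VY0 sqrrN; nra.
Qed.

Lemma ler_mul_of_quadratic_bound (R : realFieldType) (a b d : R) :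
  0 <= a -> 0 <= b -> (forall t, 2 * t * a ^+ 2 <= d * (a ^+ 2 + t ^+ 2 * b ^+ 2)) ->
  a <= d * b.
Proof.
move=> a_ge0 b_ge0 bound; have [b0|b_neq0] := eqVneq b 0.
  have := bound (d / 2 + 1); rewrite b0 expr0n mulr0 addr0 => ba.
  by rewrite mulr0; nra.
have b_gt0 : 0 < b by rewrite lt_def b_neq0.
have [a0|a_neq0] := eqVneq a 0; first by move: (bound 1); rewrite a0; nra.
have a2_gt0 : 0 < a ^+ 2 by rewrite exprn_gt0 // lt_def a_neq0.
have := bound (a / b); rewrite -exprMn divfK // => ab.
suff : a / b <= d by rewrite ler_pdivrMr.
nra.
Qed.

Theorem corollary1 (R : rcfType) (m n p r : nat)
  (A : {linear 'M[R[i]]_(m, n) -> 'cV[R[i]]_p})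
  (Astar : 'cV[R[i]]_p -> 'M[R[i]]_(m, n)) (delta : R)
  (O Psi Ups : 'M[R[i]]_(m, n) -> Prop)
  (PPsi PUps : 'M[R[i]]_(m, n) -> 'M[R[i]]_(m, n)) (X : 'M[R[i]]_(m, n)) :
  is_adjoint A Astar ->
  is_rip_const r A delta ->
  atom_set O ->
  (forall a, Psi a -> O a) -> (forall a, Ups a -> O a) ->
  is_orth_proj Psi PPsi -> is_orth_proj Ups PUps ->
  (forall Y, PPsi Y - PUps (PPsi Y) = PPsi (Y - PUps Y)) ->
  X - PUps X = 0 ->
  card_le Psi r ->
  frob (let Z := PPsi (Astar (A (PPsi X))) in Z - PUps Z)
    <= Num.sqrt 2 * delta * frob (PPsi X).
Proof.
move=> adjA [ripA _] [atom_rank1 _] PsiO _ projPsi projUps Pcomm UpsX cardPsi /=.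
set Y := PPsi X; set W := Astar (A Y); set Z := PPsi W; set V := Z - PUps Z.
have spanPsiY : in_span Psi Y := orth_proj_span projPsi X.
have spanUpsY : in_span Ups Y.
  have <- : PUps Y = Y.
    by apply/eqP; rewrite eq_sym -subr_eq0 Pcomm UpsX (orth_proj0 projPsi).
  exact: orth_proj_span.
have spanPsiV : in_span Psi V by rewrite /V /Z Pcomm; exact: orth_proj_span.
have VY0 : rdot V Y = 0 := rdot_orth_proj_residual projUps Z spanUpsY.
have VV : rdot V V = rdot (A V) (A Y).
  rewrite (rdot_orth_proj_residualxx projUps) (rdot_orth_projr projPsi) //.
  by rewrite /rdot -vinnerE adjA.
have [B [rankB spanB]] :=
  span_rank1_sub cardPsi (fun a Psi_a => (atom_rank1 a (PsiO a Psi_a)).1).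
have rankVY (t : R) : (\rank (V + (t%:C)%C *: Y)%R <= r)%N.
  by apply: leq_trans (mxrankS _) rankB; rewrite addmx_sub ?scalemx_sub ?spanB.
have := rip_polarization ripA rankVY VY0; rewrite -VV -!frob_sqr => bound.
have le_VY := ler_mul_of_quadratic_bound (frob_ge0 V) (frob_ge0 Y) bound.
apply: le_trans le_VY _; rewrite -mulrA ler_peMl ?mulr_ge0 ?frob_ge0 ?ripA.1 //.
by rewrite -{1}sqrtr1 ler_sqrt // ler1n.
Qed.
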